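(* Let $n\geq 3$ and $k\geq 2$ be integers. Then $$\Phi_k (P_n^2)=\frac{1}{8}\left( k^{n^2} -k^{\lceil \frac{n^2}{2}\rceil} - 2k^{n\lceil\frac{n}{2}\rceil}-2k^{\frac{n(n+1)}{2} } +2k^{\lceil \frac{n}{2}\rceil^2}+2k^{\lceil \frac{n}{2}\rceil \lceil \frac{n+1}{2}\rceil}\right).$$
   Context: $P_n$ is the path on $n$ vertices and $P_n^2=P_n\square P_n$ is the Cartesian product ($V(G\square H)=V(G)\times V(H)$, $(g,h)\sim(g',h')$ iff $g=g'$ and $hh'\in E(H)$, or $gg'\in E(G)$ and $h=h'$), i.e. the $n\times n$ grid. A vertex coloring is distinguishing if the identity is the only automorphism preserving it. Two colorings $c_1,c_2$ of a graph $G$ are equivalent if there is an automorphism $\alpha$ of $G$ with $c_1(v)=c_2(\alpha(v))$ for all $v\in V(G)$. $\Phi_k(G)$ denotes the number of non-equivalent distinguishing vertex colorings of $G$ with colors from $\{1,\ldots,k\}$ (not all colors need be used). *)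

From mathcomp Require Import all_boot all_order all_fingroup all_algebra.
Set Implicit Arguments. Unset Strict Implicit. Unset Printing Implicit Defensive.

Definition is_graph_aut (V : finType) (e : rel V) (a : {perm V}) : bool :=
  [forall x, forall y, e x y == e (a x) (a y)].

(* Vertex colorings with colors from a k-element set (colors 0..k-1 stand for 1..k). *)
Definition coloring (V : finType) (k : nat) := {ffun V -> 'I_k}.

Definition distinguishing (V : finType) (e : rel V) (k : nat) (c : coloring V k) : bool :=
  [forall a : {perm V}, (is_graph_aut e a && [forall v, c (a v) == c v]) ==> (a == 1%g)].

Definition equiv_colorings (V : finType) (e : rel V) (k : nat) (c1 c2 : coloring V k) : bool :=
  [exists a : {perm V}, is_graph_aut e a && [forall v, c1 v == c2 (a v)]].

Definition Phi (V : finType) (e : rel V) (k : nat) : nat :=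
  #|[set [set c2 : coloring V k | equiv_colorings e c1 c2]
     | c1 in [set c : coloring V k | distinguishing e c]]|.

Definition path_adj (n : nat) (i j : 'I_n) : bool :=
  (i.+1 == j :> nat) || (j.+1 == i :> nat).

Definition cart_adj (V W : finType) (eG : rel V) (eH : rel W) : rel (V * W) :=
  fun x y => ((x.1 == y.1) && eH x.2 y.2) || (eG x.1 y.1 && (x.2 == y.2)).

Definition grid_adj (n : nat) : rel ('I_n * 'I_n) :=
  cart_adj (@path_adj n) (@path_adj n).

From mathcomp Require Import all_boot all_order all_fingroup all_algebra.
From mathcomp Require Import zify lra.
Set Implicit Arguments. Unset Strict Implicit. Unset Printing Implicit Defensive.

(* For n >= 2 the automorphisms of the n x n grid are the eight symmetries of the
   square: an automorphism sends the corner (0,0) to a corner, the only vertices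
   of degree 2, and an automorphism fixing (0,0), (0,1) and (1,0) fixes every
   vertex, by induction on the distance to (0,0).  So a distinguishing coloring
   has 8 equivalent colorings and 8 * Phi_k counts the distinguishing colorings.
   A coloring is not distinguishing iff it is fixed by the half-turn or by one of
   the four reflections (a quarter-turn squares to the half-turn), and any two of
   these five symmetries generate a group containing the half-turn.  Inclusion-
   exclusion around the half-turn thus only needs the colorings fixed by one of
   them, or by a reflection and the half-turn; each such set has k ^ (number of
   orbits) elements, counted through a fundamental domain. *)

Definition fixed_colorings (T : finType) (k : nat) (g : T -> T) : {set coloring T k} :=
  [set c : coloring T k | [forall v, c (g v) == c v]].

Lemma fixed_coloringsP (T : finType) (k : nat) (g : T -> T) (c : coloring T k) :
  reflect (forall v, c (g v) = c v) (c \in fixed_colorings k g).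
Proof. by rewrite inE; apply: (iffP forallP) => h v; apply/eqP. Qed.

Section Automorphisms.
Variables (T : finType) (e : rel T).
Local Notation aut := (is_graph_aut e).
Local Open Scope group_scope.

Lemma graph_autP (a : {perm T}) : reflect (forall x y, e (a x) (a y) = e x y) (aut a).
Proof.
apply: (iffP forallP) => [h x y | h x]; last by apply/forallP => y; rewrite h.
by have /forallP/(_ y)/eqP := h x.
Qed.

Lemma graph_aut1 : aut 1.
Proof. by apply/graph_autP => x y; rewrite !perm1. Qed.

Lemma graph_autM (a b : {perm T}) : aut a -> aut b -> aut (a * b).
Proof.
by move=> /graph_autP ha /graph_autP hb; apply/graph_autP => x y; rewrite !permM hb ha.
Qed.

Lemma graph_autV (a : {perm T}) : aut a -> aut a^-1.
Proof. by move=> /graph_autP ha; apply/graph_autP => x y; rewrite -ha !permKV. Qed.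

Lemma graph_aut_degree (a : {perm T}) (v : T) :
  aut a -> #|[set w | e (a v) w]| = #|[set w | e v w]|.
Proof.
move=> /graph_autP ha; rewrite -(card_imset [set w | e v w] (@perm_inj _ a)).
apply: eq_card => w; rewrite inE; apply/idP/imsetP => [evw | [u + ->]].
  exists (a^-1 w); last by rewrite permKV.
  by rewrite inE -ha permKV.
by rewrite inE ha.
Qed.

Lemma graph_aut_fix_common_neighbor (b : {perm T}) (v y1 y2 : T) :
  aut b -> b y1 = y1 -> b y2 = y2 -> e v y1 -> e v y2 ->
  (forall w, e w y1 -> e w y2 -> w != v -> b w = w) -> b v = v.
Proof.
move=> /graph_autP hb by1 by2 ev1 ev2 hfix; apply/eqP/negPn/negP => bv.
have /perm_inj bbv : b (b v) = b v.
  by apply: hfix bv; [rewrite -[y1]by1 hb | rewrite -[y2]by2 hb].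
by rewrite bbv eqxx in bv.
Qed.

Definition graph_auts : {set {perm T}} := [set a | aut a].

End Automorphisms.

Section Colorings.
Variables (T : finType) (e : rel T) (k : nat).
Local Notation aut := (is_graph_aut e).
Local Notation equiv := (@equiv_colorings T e k).
Local Open Scope group_scope.

Lemma distinguishingP (c : coloring T k) :
  reflect (forall a, aut a -> (forall v, c (a v) = c v) -> a = 1) (distinguishing e c).
Proof.
apply: (iffP forallP) => [h a ha hc | h a].
  by apply/eqP; move/implyP: (h a); apply; rewrite ha; apply/forallP => v; rewrite hc.
by apply/implyP => /andP[ha /forallP hc]; apply/eqP/h => // v; apply/eqP.
Qed.

Lemma equiv_coloringsP (c1 c2 : coloring T k) :
  reflect (exists2 a, aut a & forall v, c1 v = c2 (a v)) (equiv c1 c2).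
Proof.
apply: (iffP existsP) => [[a /andP[ha /forallP h]] | [a ha h]].
  by exists a => // v; apply/eqP.
by exists a; rewrite ha; apply/forallP => v; rewrite h.
Qed.

Lemma equiv_colorings_refl (c : coloring T k) : equiv c c.
Proof. by apply/equiv_coloringsP; exists 1 => [|v]; rewrite ?perm1 ?graph_aut1. Qed.

Lemma equiv_colorings_sym (c1 c2 : coloring T k) : equiv c1 c2 -> equiv c2 c1.
Proof.
move=> /equiv_coloringsP[a ha h]; apply/equiv_coloringsP.
by exists a^-1 => [|v]; rewrite ?graph_autV ?h ?permKV.
Qed.

Lemma equiv_colorings_trans (c1 c2 c3 : coloring T k) :
  equiv c1 c2 -> equiv c2 c3 -> equiv c1 c3.
Proof.
move=> /equiv_coloringsP[a ha h12] /equiv_coloringsP[b hb h23]; apply/equiv_coloringsP.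
by exists (a * b) => [|v]; rewrite ?graph_autM ?permM ?h12 ?h23.
Qed.

Lemma distinguishing_equiv (c1 c2 : coloring T k) :
  equiv c1 c2 -> distinguishing e c1 -> distinguishing e c2.
Proof.
move=> /equiv_coloringsP[a ha h] /distinguishingP d1; apply/distinguishingP => p hp hc.
have /permP conj1 : a * p * a^-1 = 1.
  apply: d1 => [|v]; first by rewrite !graph_autM ?graph_autV.
  by rewrite !permM h permKV hc -h.
by apply/permP => w; have := conj1 (a^-1 w); rewrite !permM permKV !perm1 => /perm_inj.
Qed.

Lemma card_equiv_class (c : coloring T k) :
  distinguishing e c -> #|[set c' | equiv c c']| = #|graph_auts e|.
Proof.
move=> /distinguishingP dc.
have -> : [set c' | equiv c c'] = [set [ffun w => c ((a : {perm T})^-1 w)] | a in graph_auts e].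
  apply/setP => c'; rewrite inE; apply/equiv_coloringsP/imsetP => [[a ha h] | [a + ->]].
    by exists a; rewrite ?inE //; apply/ffunP => w; rewrite ffunE h permKV.
  by rewrite inE => ha; exists a => // v; rewrite ffunE permK.
apply: card_in_imset => a b; rewrite !inE => ha hb /ffunP eab.
have /permP ba1 : b * a^-1 = 1.
  apply: dc => [|w]; first by rewrite graph_autM ?graph_autV.
  by have := eab (b w); rewrite !ffunE permK permM => <-.
by apply/permP => w; have := ba1 w; rewrite permM perm1 => /(canRL (permKV a)) <-.
Qed.

Lemma Phi_mul_card_auts :
  (Phi e k * #|graph_auts e|)%N = #|[set c : coloring T k | distinguishing e c]|.
Proof.
set D := [set c : coloring T k | distinguishing e c].
have equivD : {in D & &, equivalence_rel equiv}.
  move=> c1 c2 c3 _ _ _; split=> [|h12]; first exact: equiv_colorings_refl.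
  apply/idP/idP; [exact: equiv_colorings_trans (equiv_colorings_sym h12) |].
  exact: equiv_colorings_trans.
have classD c : c \in D -> [set c' | equiv c c'] = [set c' in D | equiv c c'].
  rewrite inE => dc; apply/setP => c'; rewrite !inE.
  case h : (equiv c c'); rewrite ?andbF ?andbT //.
  by rewrite (distinguishing_equiv h dc).
rewrite /Phi -/D (eq_in_imset classD) (card_partition (equivalence_partitionP equivD)).
rewrite -sum_nat_const; apply: eq_bigr => _ /imsetP[c cD ->].
by rewrite -classD ?card_equiv_class //; rewrite inE in cD.
Qed.

End Colorings.

Section Counting.
Variable T : finType.

Lemma card_colorings_retract (k : nat) (F : {set coloring T k}) (S : {set T}) (rho : T -> T) :
  (forall v, rho v \in S) -> {in S, forall s, rho s = s} ->
  (forall c, (c \in F) = [forall v, c v == c (rho v)]) -> #|F| = k ^ #|S|.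
Proof.
move=> rhoS rhoK defF.
pose ext (f : {ffun {x | x \in S} -> 'I_k}) : coloring T k :=
  [ffun v => f (exist _ (rho v) (rhoS v))].
have ext_inj : injective ext.
  move=> f g /ffunP efg; apply/ffunP => -[x xS]; have := efg x; rewrite !ffunE.
  suff -> : exist _ (rho x) (rhoS x) = exist (fun x => x \in S) x xS by [].
  by apply: val_inj; rewrite /= rhoK.
suff -> : F = [set ext f | f in setT].
  by rewrite card_imset // cardsT card_ffun card_ord card_sig.
apply/setP => c; rewrite defF; apply/forallP/imsetP => [crho | [f _ ->] v].
  exists [ffun x : {x | x \in S} => c (val x)]; rewrite ?inE //.
  by apply/ffunP => v; rewrite !ffunE; apply/eqP.
by rewrite !ffunE; apply/eqP; f_equal; apply: val_inj; rewrite /= (rhoK (rho v)) ?rhoS.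
Qed.

(* [S] is a fundamental domain of the involution [g] acting on [W]. *)
Lemma card_involution_domain (W S : {set T}) (g : T -> T) :
  involutive g -> {in W, forall v, g v \in W} -> S \subset W ->
  {in W, forall v, (v \in S) || (g v \in S)} -> {in S, forall v, g v \in S -> g v = v} ->
  (#|S| * 2 = #|W| + #|[set v in W | g v == v]|)%N.
Proof.
move=> gK gW sSW coverS fixS; have g_inj := inv_inj gK.
have defW : W = S :|: g @: S.
  apply/setP => v; rewrite inE; apply/idP/orP => [vW | [/(subsetP sSW) // | /imsetP[w wS ->]]].
    by case/orP: (coverS v vW) => vS; [left | right; apply/imsetP; exists (g v); rewrite ?gK].
  exact/gW/(subsetP sSW).
have defFix : S :&: g @: S = [set v in W | g v == v].
  apply/setP => v; rewrite !inE; apply/andP/andP => [[vS /imsetP[w wS vw]] | [vW /eqP gv]].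
    by rewrite vw gK (fixS w wS) -?vw // (subsetP sSW).
  have vS : v \in S by case/orP: (coverS v vW); rewrite ?gv.
  by split; last by apply/imsetP; exists v; rewrite ?gv.
have fix_le_S : #|[set v in W | g v == v]| <= #|S|.
  by rewrite -defFix subset_leq_card ?subsetIl.
have : #|W| = #|S| + #|S| - #|[set v in W | g v == v]|.
  by rewrite {1}defW cardsU card_imset // defFix.
lia.
Qed.

Lemma card_fixed_involution (k : nat) (g : T -> T) : involutive g ->
  #|fixed_colorings k g| = k ^ (#|T| + #|[set v | g v == v]|)./2.
Proof.
(* In each orbit, [S] keeps the point that comes first in the enumeration of [T]. *)
move=> gK; set S := [set v | enum_rank v <= enum_rank (g v)].
have coverS v : (v \in S) || (g v \in S) by rewrite !inE gK leq_total.
have fixS : {in S, forall v, g v \in S -> g v = v}.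
  move=> v; rewrite !inE gK => le_v_gv le_gv_v.
  by apply/enum_rank_inj/val_inj/eqP; rewrite eqn_leq le_v_gv le_gv_v.
have card_S : (#|S| * 2 = #|T| + #|[set v | g v == v]|)%N.
  have -> : [set v | g v == v] = [set v in setT | g v == v] by apply/setP => v; rewrite !inE.
  by rewrite -cardsT; apply: card_involution_domain; rewrite ?subsetT.
rewrite -card_S muln2 half_double.
apply: (card_colorings_retract (rho := fun v => if v \in S then v else g v)) => [v | s -> //|c].
  by case: ifP => // /negbT vS; move: (coverS v); rewrite (negbTE vS).
apply/fixed_coloringsP/forallP => [cg v | crho v]; first by case: ifP => // _; rewrite cg.
have /eqP := crho v; have /eqP := crho (g v); rewrite /= gK.
case: (boolP (v \in S)) => vS; case: (boolP (g v \in S)) => gvS /= h1 h2.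
- by rewrite (fixS v vS gvS).
- exact: h1.
- by rewrite h2.
- by move: (coverS v); rewrite (negbTE vS) (negbTE gvS).
Qed.

Lemma card_setU_core (I : Type) (X : {set T}) (r : seq I) (F : I -> {set T}) :
  pairwise (fun i j => F i :&: F j \subset X) r ->
  #|X :|: \bigcup_(i <- r) F i| = (#|X| + \sum_(i <- r) #|F i :\: X|)%N.
Proof.
elim: r => [|i r IH]; first by rewrite !big_nil setU0 addn0.
rewrite /= => /andP[Fi_r /IH {}IH]; rewrite !big_cons setUCA cardsU IH.
have Fi_core : F i :&: \bigcup_(j <- r) F j \subset X.
  elim: r Fi_r {IH} => [|j r IHr]; first by rewrite big_nil setI0 sub0set.
  by rewrite /= big_cons setIUr subUset => /andP[-> /IHr].
have -> : F i :&: (X :|: \bigcup_(j <- r) F j) = F i :&: X.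
  by rewrite setIUr; apply/setUidPl; rewrite subsetI subsetIl Fi_core.
by rewrite -(cardsID X (F i)) setIC; lia.
Qed.

End Counting.

Lemma half_sqr_add_odd (n : nat) : (n * n + odd n * odd n)./2 = uphalf (n ^ 2).
Proof. by rewrite -(odd_double_half n); case: (odd n); nia. Qed.

Lemma half_sqr_add_odd_mul (n : nat) : (n * n + odd n * n)./2 = n * uphalf n.
Proof. by rewrite -(odd_double_half n); case: (odd n); nia. Qed.

Lemma half_sqr_add (n : nat) : (n * n + n)./2 = (n * n.+1) %/ 2.
Proof. nia. Qed.

Lemma half_half_sqr_add_uphalf (n : nat) :
  ((n * n + n)./2 + uphalf n)./2 = uphalf n * uphalf n.+1.
Proof. by rewrite -(odd_double_half n); case: (odd n); nia. Qed.

Section Grid.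
Variable n : nat.
Local Notation V := ('I_n * 'I_n)%type.
Local Notation e := (@grid_adj n).
Local Notation aut := (is_graph_aut e).

Definition row_of (v : V) : nat := v.1.
Definition col_of (v : V) : nat := v.2.
Arguments row_of : simpl never.
Arguments col_of : simpl never.

Lemma grid_adjE (x y : V) :
  e x y = (row_of x == row_of y)
            && (((col_of x).+1 == col_of y) || ((col_of y).+1 == col_of x))
       || (((row_of x).+1 == row_of y) || ((row_of y).+1 == row_of x))
            && (col_of x == col_of y).
Proof. by []. Qed.

Lemma grid_vertex_ext (x y : V) : row_of x = row_of y -> col_of x = col_of y -> x = y.
Proof. by case: x y => [i j] [i' j']; rewrite /row_of /col_of /= => /val_inj -> /val_inj ->. Qed.

Lemma grid_vertex_coords (x y : V) : x = y -> row_of x = row_of y /\ col_of x = col_of y.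
Proof. by move->. Qed.

Lemma grid_vertex_neq (x y : V) : x != y -> ~ (row_of x = row_of y /\ col_of x = col_of y).
Proof. by move=> /eqP nxy [h1 h2]; apply/nxy/grid_vertex_ext. Qed.

Lemma grid_vertex_eqE (x y : V) : (x == y) = (row_of x == row_of y) && (col_of x == col_of y).
Proof.
by apply/eqP/andP => [-> // | [/eqP x1 /eqP x2]]; apply: grid_vertex_ext.
Qed.

Lemma grid_vertex_exists (i j : nat) :
  i < n -> j < n -> exists v : V, row_of v = i /\ col_of v = j.
Proof. by move=> lt_i lt_j; exists (Ordinal lt_i, Ordinal lt_j). Qed.

Lemma grid_bounds (v : V) : row_of v < n /\ col_of v < n.
Proof. by rewrite /row_of /col_of !ltn_ord. Qed.

(* The eight symmetries of the square: transpose if [t], then reverse the row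
   index if [a] and the column index if [b]. *)
Definition grid_sym (a b t : bool) (v : V) : V :=
  let w := if t then (v.2, v.1) else v in
  (if a then rev_ord w.1 else w.1, if b then rev_ord w.2 else w.2).

Lemma grid_sym_row a b t v :
  row_of (grid_sym a b t v) =
  if a then n - (if t then col_of v else row_of v).+1 else if t then col_of v else row_of v.
Proof. by case: a; case: t. Qed.

Lemma grid_sym_col a b t v :
  col_of (grid_sym a b t v) =
  if b then n - (if t then row_of v else col_of v).+1 else if t then row_of v else col_of v.
Proof. by case: b; case: t. Qed.

Lemma grid_symM a1 b1 t1 a2 b2 t2 v :
  grid_sym a1 b1 t1 (grid_sym a2 b2 t2 v) =
  grid_sym (a1 (+) (if t1 then b2 else a2)) (b1 (+) (if t1 then a2 else b2)) (t1 (+) t2) v.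
Proof.
apply: grid_vertex_ext; rewrite !(grid_sym_row, grid_sym_col); have [? ?] := grid_bounds v;
  by case: a1; case: b1; case: t1; case: a2; case: b2; case: t2 => /=; lia.
Qed.

Lemma grid_sym_id v : grid_sym false false false v = v.
Proof. by case: v. Qed.

Lemma grid_symK a b t :
  cancel (grid_sym a b t) (grid_sym (if t then b else a) (if t then a else b) t).
Proof. by move=> v; rewrite grid_symM; case: a; case: b; case: t; rewrite grid_sym_id. Qed.

Definition grid_perm a b t : {perm V} := perm (can_inj (grid_symK a b t)).

Lemma grid_permE a b t : grid_perm a b t =1 grid_sym a b t.
Proof. exact: permE. Qed.

Lemma grid_perm_aut a b t : aut (grid_perm a b t).
Proof.
apply/graph_autP => x y; rewrite !grid_permE !grid_adjE !(grid_sym_row, grid_sym_col).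
have [? ?] := grid_bounds x; have [? ?] := grid_bounds y.
by case: a; case: b; case: t => /= *; apply/idP/idP; lia.
Qed.

Lemma grid_perm_id : grid_perm false false false = 1%g.
Proof. by apply/permP => v; rewrite grid_permE grid_sym_id perm1. Qed.

Hypothesis n_gt1 : 1 < n.

Lemma grid_perm_inj a b t a' b' t' :
  grid_perm a b t = grid_perm a' b' t' -> (a, b, t) = (a', b', t').
Proof.
have n_gt0 : 0 < n := ltnW n_gt1.
have [o [o1 o2]] := grid_vertex_exists n_gt0 n_gt0.
have [p [p1 p2]] := grid_vertex_exists n_gt0 n_gt1.
move=> /permP eq_ab; move: (eq_ab o) (eq_ab p) => {eq_ab}; rewrite !grid_permE.
move=> /grid_vertex_coords[] + + /grid_vertex_coords[]; rewrite !(grid_sym_row, grid_sym_col).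
by rewrite o1 o2 p1 p2; case: a; case: b; case: t; case: a'; case: b'; case: t' => //=; lia.
Qed.

Lemma grid_aut_rigid (b : {perm V}) :
  aut b -> (forall v : V, row_of v + col_of v <= 1 -> b v = v) -> b = 1%g.
Proof.
move=> hb fix01; apply/permP => v; rewrite perm1.
suff fix_le s (x : V) : row_of x + col_of x <= s -> b x = x by apply: fix_le.
elim: s x => [|s IH] x le_x_s; first by apply: fix01; lia.
have [le_x_s' | /eqP sum_x] := boolP (row_of x + col_of x <= s); first exact: IH.
have [s0 | s_gt0] := posnP s; first by apply: fix01; lia.
have {}sum_x : row_of x + col_of x = s.+1 by lia.
(* Besides [w], the two neighbours of [w] closer to the corner have one common
   neighbour, itself closer to the corner. *)
have fix_interior (w : V) :
    row_of w + col_of w = s.+1 -> 0 < row_of w -> 0 < col_of w -> b w = w.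
  move=> sum_w w1 w2; have [? ?] := grid_bounds w.
  have [y1 [y11 y12]] := grid_vertex_exists (i := (row_of w).-1) (j := col_of w)
                             ltac:(lia) ltac:(lia).
  have [y2 [y21 y22]] := grid_vertex_exists (i := row_of w) (j := (col_of w).-1)
                             ltac:(lia) ltac:(lia).
  apply: (graph_aut_fix_common_neighbor hb (y1 := y1) (y2 := y2)).
  1,2: by apply: IH; lia.
  1,2: by rewrite grid_adjE; lia.
  move=> u; rewrite !grid_adjE => ? ? /grid_vertex_neq ?; apply: IH; lia.
have [[x1 x2] | x_border] :
    (0 < row_of x /\ 0 < col_of x) \/ (row_of x = 0 \/ col_of x = 0) by lia.
  exact: fix_interior.
(* One coordinate of [x] is 0, so with truncated predecessors [y] is the
   neighbour of [x] closer to the corner. *)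
have [? ?] := grid_bounds x.
have [y [y1 y2]] := grid_vertex_exists (i := (row_of x).-1) (j := (col_of x).-1)
                      ltac:(lia) ltac:(lia).
apply: (graph_aut_fix_common_neighbor hb (y1 := y) (y2 := y)).
1,2: by apply: IH; lia.
1,2: by rewrite grid_adjE; lia.
move=> u; rewrite !grid_adjE => ? _ /grid_vertex_neq ?; have [? ?] := grid_bounds u.
have [le_u_s | ?] := leqP (row_of u + col_of u) s; first exact: IH.
apply: fix_interior; lia.
Qed.

Lemma grid_aut_eq (a g : {perm V}) :
  aut a -> aut g -> (forall v : V, row_of v + col_of v <= 1 -> a v = g v) -> a = g.
Proof.
move=> ha hg eq_ag; rewrite -(mulgKV g a) (grid_aut_rigid (b := a * g^-1)%g) ?mul1g //.
  by rewrite graph_autM ?graph_autV.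
by move=> v le_v1; rewrite permM eq_ag // permK.
Qed.

Local Notation degree v := #|[set w | e v w]|.

Lemma grid_degree_origin (o : V) : row_of o = 0 -> col_of o = 0 -> degree o <= 2.
Proof.
move=> o1 o2; have n_gt0 : 0 < n := ltnW n_gt1.
have [p [p1 p2]] := grid_vertex_exists n_gt0 n_gt1.
have [q [q1 q2]] := grid_vertex_exists n_gt1 n_gt0.
apply: leq_trans (_ : #|[set p; q]| <= 2); last by rewrite cards2; case: (p != q).
apply/subset_leq_card/subsetP => w; rewrite !inE grid_adjE => ow.
have [[w1 w2] | [w1 w2]] :
    (row_of w = row_of p /\ col_of w = col_of p) \/ (row_of w = row_of q /\ col_of w = col_of q).
  by have [? ?] := grid_bounds w; lia.
- by rewrite (grid_vertex_ext w1 w2) eqxx.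
- by rewrite (grid_vertex_ext w1 w2) eqxx orbT.
Qed.

Lemma grid_degree_inner_row (v : V) : 0 < row_of v < n.-1 -> 3 <= degree v.
Proof.
move=> v1; have [? ?] := grid_bounds v.
have [w1 [w11 w12]] := grid_vertex_exists (i := (row_of v).-1) (j := col_of v)
                        ltac:(lia) ltac:(lia).
have [w2 [w21 w22]] := grid_vertex_exists (i := (row_of v).+1) (j := col_of v)
                        ltac:(lia) ltac:(lia).
have [j lt_j vj] : exists2 j, j < n & (j.+1 = col_of v) \/ ((col_of v).+1 = j).
  by case: (posnP (col_of v)) => ?; [exists 1 | exists (col_of v).-1]; lia.
have [w3 [w31 w32]] := grid_vertex_exists (proj1 (grid_bounds v)) lt_j.
have neq (x y : V) : row_of x <> row_of y \/ col_of x <> col_of y -> x != y.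
  by move=> nxy; apply/eqP => /grid_vertex_coords; lia.
have <- : #|[:: w1; w2; w3]| = 3.
  by apply/card_uniqP; rewrite /= !inE !negb_or !neq //; lia.
apply/subset_leq_card/subsetP => w; rewrite !inE => /or3P[]/eqP->; rewrite grid_adjE; lia.
Qed.

Lemma grid_degree_inner (v : V) : 0 < row_of v < n.-1 \/ 0 < col_of v < n.-1 -> 3 <= degree v.
Proof.
case=> [/grid_degree_inner_row // | v2].
rewrite -(graph_aut_degree v (grid_perm_aut false false true)).
by apply: grid_degree_inner_row; rewrite grid_permE grid_sym_row.
Qed.

Lemma grid_aut_corner (a : {perm V}) (o : V) : aut a -> row_of o = 0 -> col_of o = 0 ->
  (row_of (a o) = 0 \/ row_of (a o) = n.-1) /\ (col_of (a o) = 0 \/ col_of (a o) = n.-1).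
Proof.
move=> ha o1 o2; have := grid_degree_origin o1 o2; rewrite -(graph_aut_degree o ha) => deg_le2.
have not_inner : ~ (0 < row_of (a o) < n.-1 \/ 0 < col_of (a o) < n.-1).
  by move=> /grid_degree_inner/leq_trans/(_ deg_le2).
by have [? ?] := grid_bounds (a o); lia.
Qed.

Lemma grid_aut_sym (a : {perm V}) : aut a -> exists x y z, a = grid_perm x y z.
Proof.
move=> ha; have n_gt0 : 0 < n := ltnW n_gt1.
have [o [o1 o2]] := grid_vertex_exists n_gt0 n_gt0.
have [p [p1 p2]] := grid_vertex_exists n_gt0 n_gt1.
have [q [q1 q2]] := grid_vertex_exists n_gt1 n_gt0.
have corner := grid_aut_corner ha o1 o2.
have /graph_autP a_adj := ha.
have op : e (a o) (a p) by rewrite a_adj grid_adjE; lia.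
have oq : e (a o) (a q) by rewrite a_adj grid_adjE; lia.
have /grid_vertex_neq pq : a p != a q.
  by rewrite (inj_eq perm_inj); apply/eqP => /grid_vertex_coords; lia.
move: op oq; rewrite !grid_adjE => op oq.
have [? ?] := grid_bounds (a o); have [? ?] := grid_bounds (a p); have [? ?] := grid_bounds (a q).
(* The symmetry is read off the image of the corner [o] and of its neighbour [p]. *)
exists (row_of (a o) != 0), (col_of (a o) != 0), (row_of (a p) != row_of (a o)).
apply: grid_aut_eq => // [|v le_v1]; first exact: grid_perm_aut.
have [->|[->|->]] : v = o \/ v = p \/ v = q.
  have [? ?] := grid_bounds v.
  have [[? ?] | [[? ?] | [? ?]]] :
    (row_of v = 0 /\ col_of v = 0) \/ (row_of v = 0 /\ col_of v = 1) \/
    (row_of v = 1 /\ col_of v = 0) by lia.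
  - by left; apply: grid_vertex_ext; lia.
  - by right; left; apply: grid_vertex_ext; lia.
  - by right; right; apply: grid_vertex_ext; lia.
all: apply: grid_vertex_ext; rewrite grid_permE !(grid_sym_row, grid_sym_col).
all: rewrite ?o1 ?o2 ?p1 ?p2 ?q1 ?q2.
all: case: (row_of (a o) =P 0) => ?; case: (col_of (a o) =P 0) => ?.
all: by case: (row_of (a p) =P row_of (a o)) => ? /=; lia.
Qed.

Lemma card_grid_auts : #|graph_auts e| = 8.
Proof.
have -> : graph_auts e = [set grid_perm x.1.1 x.1.2 x.2 | x in [set: bool * bool * bool]].
  apply/setP => a; rewrite inE; apply/idP/imsetP => [/grid_aut_sym[x [y [z ->]]] | [x _ ->]].
    by exists (x, y, z).
  exact: grid_perm_aut.
rewrite card_imset ?cardsT ?card_prod ?card_bool // => -[[x y] z] [[x' y'] z'].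
by move=> /grid_perm_inj[-> -> ->].
Qed.

Local Notation half_turn := (grid_sym true true false).
Local Notation flip_rows := (grid_sym true false false).
Local Notation flip_cols := (grid_sym false true false).
Local Notation transpose := (grid_sym false false true).
Local Notation antitranspose := (grid_sym true true true).

Definition grid_reflections : seq (V -> V) := [:: flip_rows; flip_cols; transpose; antitranspose].

Variable k : nat.
Local Notation fixed := (fixed_colorings k).

Lemma fixed_grid_symM a1 b1 t1 a2 b2 t2 (c : coloring V k) :
  c \in fixed (grid_sym a1 b1 t1) -> c \in fixed (grid_sym a2 b2 t2) ->
  c \in fixed (grid_sym (a1 (+) (if t1 then b2 else a2)) (b1 (+) (if t1 then a2 else b2))
                        (t1 (+) t2)).
Proof.
move=> /fixed_coloringsP c1 /fixed_coloringsP c2; apply/fixed_coloringsP => v.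
by rewrite -grid_symM c1 c2.
Qed.

Lemma grid_distinguishingE :
  [set c : coloring V k | distinguishing e c] =
  ~: (fixed half_turn :|: \bigcup_(g <- grid_reflections) fixed g).
Proof.
apply/setP => c; rewrite inE in_setC /grid_reflections !big_cons big_nil setU0 !in_setU.
apply/distinguishingP/idP => [dc | notU a /grid_aut_sym[x [y [z ->]]] c_a].
  have trivial_sym x y z : c \in fixed (grid_sym x y z) -> (x, y, z) = (false, false, false).
    move=> /fixed_coloringsP cxyz; apply: grid_perm_inj; rewrite grid_perm_id.
    by apply: dc (grid_perm_aut x y z) _ => v; rewrite grid_permE.
  by rewrite !negb_or; apply/and5P; split; apply/negP => /trivial_sym.
have {c_a} cxyz : c \in fixed (grid_sym x y z).
  by apply/fixed_coloringsP => v; rewrite -grid_permE.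
have c_sq := fixed_grid_symM cxyz cxyz.
case: x y z cxyz c_sq => [] [] [] cxyz c_sq; rewrite ?grid_perm_id //.
all: by move: notU; rewrite ?cxyz ?c_sq ?orbT.
Qed.

Definition middle : {set 'I_n} := [set i : 'I_n | i == n - i.+1 :> nat].
Definition lower_half : {set 'I_n} := [set i : 'I_n | i <= n - i.+1].

Lemma card_middle : #|middle| = odd n.
Proof.
have [odd_n | even_n] := boolP (odd n).
  have lt_half : n./2 < n by lia.
  rewrite (_ : middle = [set Ordinal lt_half]) ?cards1 //.
  apply/setP => i; have := ltn_ord i; rewrite !inE -val_eqE /= => lt_i.
  by apply/eqP/eqP; lia.
rewrite (_ : middle = set0) ?cards0 //.
by apply/setP => i; rewrite !inE; have := ltn_ord i; lia.
Qed.

Lemma card_lower_half : #|lower_half| = uphalf n.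
Proof.
have fix_mid : [set i in setT | rev_ord i == i] = middle.
  by apply/setP => i; rewrite !inE -val_eqE /= eq_sym.
have cover : {in setT, forall i, (i \in lower_half) || (rev_ord i \in lower_half)}.
  by move=> i _; rewrite !inE /=; have := ltn_ord i; lia.
have fix_lower : {in lower_half, forall i, rev_ord i \in lower_half -> rev_ord i = i}.
  by move=> i; rewrite !inE /= => ? ?; apply: val_inj => /=; have := ltn_ord i; lia.
have := card_involution_domain (@rev_ordK n) (fun i _ => in_setT _) (subsetT _) cover fix_lower.
rewrite cardsT card_ord fix_mid card_middle; set m := #|lower_half|; lia.
Qed.

Lemma card_grid_diagonal : #|[set v : V | row_of v == col_of v]| = n.
Proof.
have diag_inj : injective (fun i : 'I_n => (i, i)) by move=> i j [].
rewrite -[RHS]card_ord -(card_imset _ diag_inj).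
apply: eq_card => v; rewrite inE; apply/idP/imsetP => [/eqP rc | [i _ ->]] //.
by exists v.1 => //; apply: grid_vertex_ext.
Qed.

Lemma card_grid_antidiagonal (A : {set 'I_n}) :
  #|[set v : V | (row_of v + col_of v == n.-1) && (v.2 \in A)]| = #|A|.
Proof.
have antidiag_inj : injective (fun i : 'I_n => (rev_ord i, i)) by move=> i j [].
rewrite -(card_imset _ antidiag_inj).
apply: eq_card => v; rewrite inE; apply/andP/imsetP => [[/eqP sum_v v2A] | [j jA ->]].
  exists v.2 => //; apply: grid_vertex_ext => //; move: sum_v; rewrite /row_of /col_of /=.
  by have := ltn_ord v.1; lia.
by rewrite /row_of /col_of /= jA; have := ltn_ord j; split=> //; apply/eqP; lia.
Qed.

Ltac grid_set_lia :=
  let v := fresh "v" in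
  apply/setP => v; have [? ?] := grid_bounds v;
  rewrite !inE ?in_setX grid_vertex_eqE !(grid_sym_row, grid_sym_col) /= ?inE;
  rewrite -/(row_of v) -/(col_of v); apply/idP/idP; lia.

Lemma card_grid_fixed_involution (g : V -> V) :
  involutive g -> #|fixed g| = k ^ (n * n + #|[set v | g v == v]|)./2.
Proof. by move=> gK; rewrite card_fixed_involution // card_prod card_ord. Qed.

Lemma card_fixed_half_turn : #|fixed half_turn| = k ^ uphalf (n ^ 2).
Proof.
rewrite card_grid_fixed_involution; last exact: grid_symK.
have -> : [set v | half_turn v == v] = setX middle middle by grid_set_lia.
by rewrite cardsX card_middle half_sqr_add_odd.
Qed.

Lemma card_fixed_flip_rows : #|fixed flip_rows| = k ^ (n * uphalf n).
Proof.
rewrite card_grid_fixed_involution; last exact: grid_symK.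
have -> : [set v | flip_rows v == v] = setX middle setT by grid_set_lia.
by rewrite cardsX card_middle cardsT card_ord half_sqr_add_odd_mul.
Qed.

Lemma card_fixed_flip_cols : #|fixed flip_cols| = k ^ (n * uphalf n).
Proof.
rewrite card_grid_fixed_involution; last exact: grid_symK.
have -> : [set v | flip_cols v == v] = setX setT middle by grid_set_lia.
by rewrite cardsX card_middle cardsT card_ord mulnC half_sqr_add_odd_mul.
Qed.

Lemma card_fixed_transpose : #|fixed transpose| = k ^ ((n * n.+1) %/ 2).
Proof.
rewrite card_grid_fixed_involution; last exact: grid_symK.
have -> : [set v | transpose v == v] = [set v | row_of v == col_of v] by grid_set_lia.
by rewrite card_grid_diagonal half_sqr_add.
Qed.

Lemma card_fixed_antitranspose : #|fixed antitranspose| = k ^ ((n * n.+1) %/ 2).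
Proof.
rewrite card_grid_fixed_involution; last exact: grid_symK.
have -> : [set v | antitranspose v == v] =
          [set v | (row_of v + col_of v == n.-1) && (v.2 \in setT)] by grid_set_lia.
by rewrite card_grid_antidiagonal cardsT card_ord half_sqr_add.
Qed.

Lemma card_grid_vertices : #|[set: V]| = n * n.
Proof. by rewrite cardsT card_prod card_ord. Qed.

Definition quadrant : {set V} :=
  [set v | (row_of v <= n - (row_of v).+1) && (col_of v <= n - (col_of v).+1)].
Definition triangle : {set V} := [set v | (col_of v <= row_of v) && (row_of v + col_of v < n)].

Lemma card_quadrant : #|quadrant| = uphalf n ^ 2.
Proof.
have -> : quadrant = setX lower_half lower_half.
  by apply/setP => v; rewrite /quadrant !inE -/(row_of v) -/(col_of v).
by rewrite cardsX card_lower_half mulnn.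
Qed.

Lemma card_grid_lower : #|[set v : V | col_of v <= row_of v]| * 2 = n * n + n.
Proof.
set W := [set v : V | col_of v <= row_of v].
have fix_tr : [set v in setT | transpose v == v] = [set v | row_of v == col_of v] by grid_set_lia.
have cover : {in setT, forall v, (v \in W) || (transpose v \in W)}.
  by move=> v _; rewrite !inE !(grid_sym_row, grid_sym_col) /=; lia.
have fixW : {in W, forall v, transpose v \in W -> transpose v = v}.
  move=> v; rewrite !inE !(grid_sym_row, grid_sym_col) /= => ? ?.
  by apply: grid_vertex_ext; rewrite !(grid_sym_row, grid_sym_col) /=; lia.
have := card_involution_domain (grid_symK false false true) (fun v _ => in_setT _) (subsetT W).
by move/(_ cover fixW); rewrite card_grid_vertices fix_tr card_grid_diagonal.
Qed.

Lemma card_triangle : #|triangle| = uphalf n * uphalf n.+1.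
Proof.
set W := [set v : V | col_of v <= row_of v].
have fix_atr : [set v in W | antitranspose v == v] =
               [set v | (row_of v + col_of v == n.-1) && (v.2 \in lower_half)] by grid_set_lia.
have atr_W : {in W, forall v, antitranspose v \in W}.
  by move=> v; rewrite !inE !(grid_sym_row, grid_sym_col) /=; have [? ?] := grid_bounds v; lia.
have sub_TW : triangle \subset W by apply/subsetP => v; rewrite !inE => /andP[].
have cover : {in W, forall v, (v \in triangle) || (antitranspose v \in triangle)}.
  by move=> v; rewrite !inE !(grid_sym_row, grid_sym_col) /=; have [? ?] := grid_bounds v; lia.
have fixT : {in triangle, forall v, antitranspose v \in triangle -> antitranspose v = v}.
  move=> v; rewrite !inE !(grid_sym_row, grid_sym_col) /= => ? ?; have [? ?] := grid_bounds v.
  by apply: grid_vertex_ext; rewrite !(grid_sym_row, grid_sym_col) /=; lia.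
have := card_involution_domain (grid_symK true true true) atr_W sub_TW cover fixT.
rewrite fix_atr card_grid_antidiagonal card_lower_half -half_half_sqr_add_uphalf.
by move: card_grid_lower; rewrite -/W; set w := #|W|; set t := #|triangle|; lia.
Qed.

Lemma fixed_grid_flips (c : coloring V k) : c \in fixed flip_rows -> c \in fixed half_turn ->
  forall a b, c \in fixed (grid_sym a b false).
Proof.
move=> c_fr c_ht [] [] //; first exact: fixed_grid_symM c_fr c_ht.
by apply/fixed_coloringsP => v; rewrite grid_sym_id.
Qed.

Lemma fixed_grid_diagonals (c : coloring V k) : c \in fixed transpose -> c \in fixed half_turn ->
  forall x y, c \in fixed (grid_sym x x y).
Proof.
move=> c_tr c_ht [] [] //; first exact: fixed_grid_symM c_tr c_ht.
by apply/fixed_coloringsP => v; rewrite grid_sym_id.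
Qed.

(* [quadrant_fold v] is the point of [quadrant] in the orbit of [v] under the
   group generated by [flip_rows] and [flip_cols]; [triangle_fold v] is the
   point of [triangle] in its orbit under [transpose] and [antitranspose]. *)
Definition quadrant_fold (v : V) : V :=
  grid_sym (n - (row_of v).+1 < row_of v) (n - (col_of v).+1 < col_of v) false v.

Definition triangle_fold (v : V) : V :=
  grid_sym (n <= row_of v + col_of v) (n <= row_of v + col_of v)
           ((row_of v < col_of v) (+) (n <= row_of v + col_of v)) v.

Ltac grid_fold_lia v :=
  rewrite ?inE !(grid_sym_row, grid_sym_col) /=; have [? ?] := grid_bounds v;
  repeat case: ifP => ?; lia.

Lemma card_fixed_flip_rows_half_turn :
  #|fixed flip_rows :&: fixed half_turn| = k ^ (uphalf n ^ 2).
Proof.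
rewrite -card_quadrant; apply: (card_colorings_retract (rho := quadrant_fold)) => [v | v | c].
- by rewrite /quadrant /quadrant_fold; grid_fold_lia v.
- rewrite /quadrant inE => /andP[? ?].
  by apply: grid_vertex_ext; rewrite /quadrant_fold; grid_fold_lia v.
rewrite in_setI; apply/andP/forallP => [[c_fr c_ht] v | c_fold].
  by rewrite /quadrant_fold (fixed_coloringsP _ _ (fixed_grid_flips c_fr c_ht _ _)).
split; apply/fixed_coloringsP => v; rewrite [LHS](eqP (c_fold _)) [RHS](eqP (c_fold _)).
all: by f_equal; apply: grid_vertex_ext; rewrite /quadrant_fold; grid_fold_lia v.
Qed.

Lemma card_fixed_transpose_half_turn :
  #|fixed transpose :&: fixed half_turn| = k ^ (uphalf n * uphalf n.+1).
Proof.
rewrite -card_triangle; apply: (card_colorings_retract (rho := triangle_fold)) => [v | v | c].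
- by rewrite /triangle /triangle_fold; grid_fold_lia v.
- rewrite /triangle inE => /andP[? ?].
  by apply: grid_vertex_ext; rewrite /triangle_fold; grid_fold_lia v.
rewrite in_setI; apply/andP/forallP => [[c_tr c_ht] v | c_fold].
  by rewrite /triangle_fold (fixed_coloringsP _ _ (fixed_grid_diagonals c_tr c_ht _ _)).
split; apply/fixed_coloringsP => v; rewrite [LHS](eqP (c_fold _)) [RHS](eqP (c_fold _)).
all: by f_equal; apply: grid_vertex_ext; rewrite /triangle_fold; grid_fold_lia v.
Qed.

Lemma fixed_grid_sym_half_turn a b t :
  fixed (grid_sym (~~ a) (~~ b) t) :&: fixed half_turn =
  fixed (grid_sym a b t) :&: fixed half_turn.
Proof.
apply/setP => c; rewrite !in_setI; apply/andP/andP => -[cg ch]; split => //.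
all: by case: a b t cg ch => [] [] [] cg ch; exact: fixed_grid_symM cg ch.
Qed.

Lemma pairwise_grid_reflections :
  pairwise (fun g h => fixed g :&: fixed h \subset fixed half_turn) grid_reflections.
Proof.
rewrite /= !andbT; do !(apply/andP; split); apply/subsetP => c /setIP[c1 c2].
all: first [exact: fixed_grid_symM c1 c2
           | exact: fixed_grid_symM (fixed_grid_symM c1 c2) (fixed_grid_symM c1 c2)].
Qed.

Lemma card_grid_distinguishing :
  #|[set c : coloring V k | distinguishing e c]| + k ^ uphalf (n ^ 2)
    + 2 * k ^ (n * uphalf n) + 2 * k ^ ((n * n.+1) %/ 2)
  = k ^ (n ^ 2) + 2 * k ^ (uphalf n ^ 2) + 2 * k ^ (uphalf n * uphalf n.+1).
Proof.
rewrite grid_distinguishingE; set U := _ :|: _.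
have := cardsC U; set D := #|~: U|; rewrite card_ffun card_ord card_prod card_ord mulnn.
rewrite /U card_setU_core ?pairwise_grid_reflections // /grid_reflections !big_cons big_nil addn0.
have fc_ht : fixed flip_cols :&: fixed half_turn = fixed flip_rows :&: fixed half_turn :=
  fixed_grid_sym_half_turn true false false.
have atr_ht : fixed antitranspose :&: fixed half_turn = fixed transpose :&: fixed half_turn :=
  fixed_grid_sym_half_turn false false true.
rewrite !cardsD fc_ht atr_ht card_fixed_flip_rows_half_turn card_fixed_transpose_half_turn.
rewrite card_fixed_half_turn card_fixed_flip_rows card_fixed_flip_cols.
rewrite card_fixed_transpose card_fixed_antitranspose.
have := subset_leq_card (subsetIl (fixed flip_rows) (fixed half_turn)).
have := subset_leq_card (subsetIl (fixed transpose) (fixed half_turn)).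
rewrite card_fixed_flip_rows_half_turn card_fixed_transpose_half_turn.
rewrite card_fixed_flip_rows card_fixed_transpose.
lia.
Qed.

End Grid.

Local Open Scope ring_scope.
Import GRing.Theory.

Theorem theorem5p2 (n k : nat) (hn : (3 <= n)%N) (hk : (2 <= k)%N) :
  (Phi (@grid_adj n) k)%:R =
    (1 / 8 : rat) *
    ( k%:R ^+ (n ^ 2) - k%:R ^+ uphalf (n ^ 2)
      - 2 * k%:R ^+ (n * uphalf n) - 2 * k%:R ^+ ((n * n.+1) %/ 2)
      + 2 * k%:R ^+ (uphalf n ^ 2) + 2 * k%:R ^+ (uphalf n * uphalf n.+1) ).
Proof.
have n_gt1 : (1 < n)%N := ltnW hn.
have := card_grid_distinguishing n_gt1 k.
rewrite -(Phi_mul_card_auts (@grid_adj n) k) (card_grid_auts n_gt1).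
move/(congr1 (fun m : nat => m%:R : rat)); rewrite !natrD !natrM !natrX.
lra.
Qed.
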